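(* For every LCNF formula $\Phi$ and every variable $x$, $\mathsf{MCS}(\mathsf{bve}(\Phi, x)) = \mathsf{MCS}(\Phi)$.
   Context: Fix a countable set $Lbls$ of labels. A labelled clause $C^L$ is a pair of a clause $C$ (a finite set of literals) and a finite set $L \subseteq Lbls$. An LCNF formula $\Phi$ is a finite set of labelled clauses; $Cls(\Phi) = \{C : C^L \in \Phi\}$ and $Lbls(\Phi) = \bigcup_{C^L\in\Phi} L$. $\Phi$ is satisfiable iff $Cls(\Phi)$ is. For $M \subseteq Lbls(\Phi)$, the induced subformula is $\Phi|_M = \{C^L \in \Phi : L \subseteq M\}$. A set $R \subseteq Lbls(\Phi)$ is an MCS of $\Phi$ if (i) $\Phi|_{Lbls(\Phi)\setminus R}$ is satisfiable and (ii) for every $l \in R$, $\Phi|_{(Lbls(\Phi)\setminus R)\cup\{l\}}$ is unsatisfiable; $\mathsf{MCS}(\Phi)$ is the set of all MCSes of $\Phi$. The resolvent of $(x \vee A)^{L_1}$ and $(\neg x \vee B)^{L_2}$ on $x$ is $(A \vee B)^{L_1\cup L_2}$. For an LCNF $\Phi$, let $\Phi_x$ (resp. $\Phi_{\neg x}$) be the set of its labelled clauses containing the literal $x$ (resp. $\neg x$), and $\Phi_x \otimes_x \Phi_{\neg x}$ the set of all resolvents on $x$ of a clause of $\Phi_x$ with a clause of $\Phi_{\neg x}$. Define $\mathsf{ve}(\Phi,x) = (\Phi \setminus (\Phi_x \cup \Phi_{\neg x})) \cup (\Phi_x \otimes_x \Phi_{\neg x})$ and $\mathsf{bve}(\Phi,x)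 = \mathsf{ve}(\Phi,x)$ if $|\mathsf{ve}(\Phi,x)| < |\Phi|$ (number of labelled clauses), and $\mathsf{bve}(\Phi,x) = \Phi$ otherwise. *)

From HB Require Import structures.
From mathcomp Require Import all_boot all_order.
From mathcomp Require Import finmap.

Set Implicit Arguments.
Unset Strict Implicit.
Unset Printing Implicit Defensive.

Local Open Scope fset_scope.

Section LCNF.
Variables (V Lbl : countType).

(* A literal is a variable with a polarity: (x, true) = x, (x, false) = ~x. *)
Definition lit := (V * bool)%type.
Definition clause := {fset lit}.
Definition lclause := (clause * {fset Lbl})%type.
Definition lcnf := {fset lclause}.

Definition Cls (Phi : lcnf) : {fset clause} := [fset c.1 | c in Phi].
Definition Lbls (Phi : lcnf) : {fset Lbl} := \bigcup_(c <- Phi) c.2.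

Definition sat_lit (a : V -> bool) (l : lit) : bool := a l.1 == l.2.
Definition sat_clause (a : V -> bool) (C : clause) : Prop :=
  exists2 l, l \in C & sat_lit a l.
Definition sat_clauses (S : {fset clause}) : Prop :=
  exists a : V -> bool, forall C, C \in S -> sat_clause a C.
Definition satisfiable (Phi : lcnf) : Prop := sat_clauses (Cls Phi).

Definition induced (Phi : lcnf) (M : {fset Lbl}) : lcnf :=
  [fset c in Phi | c.2 `<=` M].

Definition is_MCS (Phi : lcnf) (R : {fset Lbl}) : Prop :=
  [/\ R `<=` Lbls Phi,
      satisfiable (induced Phi (Lbls Phi `\` R)) &
      forall l, l \in R ->
        ~ satisfiable (induced Phi ((Lbls Phi `\` R) `|` [fset l]))].

Definition occ_pos (Phi : lcnf) (x : V) : lcnf := [fset c in Phi | (x, true) \in c.1].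
Definition occ_neg (Phi : lcnf) (x : V) : lcnf := [fset c in Phi | (x, false) \in c.1].

Definition resolvent (x : V) (c1 c2 : lclause) : lclause :=
  (((c1.1 `\ (x, true)) `|` (c2.1 `\ (x, false))), c1.2 `|` c2.2).

Definition resolvents (x : V) (P N : lcnf) : lcnf :=
  [fset resolvent x c1 c2 | c1 in P, c2 in N].

Definition ve (Phi : lcnf) (x : V) : lcnf :=
  (Phi `\` (occ_pos Phi x `|` occ_neg Phi x)) `|`
  resolvents x (occ_pos Phi x) (occ_neg Phi x).

Definition bve (Phi : lcnf) (x : V) : lcnf :=
  if (#|` ve Phi x| < #|` Phi|)%N then ve Phi x else Phi.

End LCNF.

From mathcomp Require Import all_boot all_order.
From mathcomp Require Import finmap.
From Stdlib Require Import Classical.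

(* Eliminating x commutes with taking induced subformulas, because a resolvent
   carries the union of the labels of its premises; and by Davis-Putnam
   resolution it preserves satisfiability.  Hence [bve Phi x] and [Phi] have
   equisatisfiable induced subformulas for every label set M, and since
   [bve Phi x] uses no new labels the two formulas have the same MCSes. *)

Set Implicit Arguments.
Unset Strict Implicit.
Unset Printing Implicit Defensive.
Local Open Scope fset_scope.

Section Induced.
Variables (V Lbl : countType).
Implicit Types (Phi Psi : lcnf V Lbl) (M N : {fset Lbl}).

Lemma satisfiableP Phi : satisfiable Phi <->
  exists a : V -> bool, forall c, c \in Phi -> sat_clause a c.1.
Proof.
split=> [[a sat_a]|[a sat_a]]; exists a.
  by move=> c cPhi; apply: sat_a; apply/imfsetP; exists c.
by move=> C /imfsetP [c cPhi ->]; apply: sat_a.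
Qed.

Lemma inducedE Phi M c : (c \in induced Phi M) = (c \in Phi) && (c.2 `<=` M).
Proof. by rewrite !inE. Qed.

Lemma Lbls_sup Phi c : c \in Phi -> c.2 `<=` Lbls Phi.
Proof. by move=> cPhi; apply: bigfcup_sup. Qed.

Lemma eq_induced Phi M N : {in Lbls Phi, M =i N} -> induced Phi M = induced Phi N.
Proof.
move=> eqMN; apply/fsetP=> c; rewrite !inducedE.
have [cPhi /=|//] := boolP (c \in Phi).
have cL := fsubsetP (Lbls_sup cPhi).
by apply/fsubsetP/fsubsetP => sub l lc; [rewrite -eqMN | rewrite eqMN]; auto.
Qed.

Section MCSTransfer.
Variables Phi Psi : lcnf V Lbl.
Hypothesis Lbls_sub : Lbls Psi `<=` Lbls Phi.
Hypothesis sat_induced :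
  forall M, satisfiable (induced Psi M) <-> satisfiable (induced Phi M).

Lemma sat_induced_eq_on M N : {in Lbls Psi, M =i N} ->
  satisfiable (induced Phi M) <-> satisfiable (induced Psi N).
Proof. by move=> eqMN; rewrite -(eq_induced eqMN); split=> /sat_induced. Qed.

Lemma sat_induced_diff R :
  satisfiable (induced Phi (Lbls Phi `\` R)) <->
  satisfiable (induced Psi (Lbls Psi `\` R)).
Proof.
apply: sat_induced_eq_on => z zL'.
by rewrite !inE zL' (fsubsetP Lbls_sub z zL').
Qed.

Lemma sat_induced_diffU1 R l :
  satisfiable (induced Phi ((Lbls Phi `\` R) `|` [fset l])) <->
  satisfiable (induced Psi ((Lbls Psi `\` R) `|` [fset l])).
Proof.
apply: sat_induced_eq_on => z zL'.
by rewrite !inE zL' (fsubsetP Lbls_sub z zL').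
Qed.

Lemma sat_induced_diffU1_notin R l : l \notin Lbls Psi ->
  satisfiable (induced Phi ((Lbls Phi `\` R) `|` [fset l])) <->
  satisfiable (induced Phi (Lbls Phi `\` R)).
Proof.
move=> lL'; apply: (iff_trans _ (iff_sym (sat_induced_diff R))).
apply: sat_induced_eq_on => z zL'.
have zl : z != l by apply: contraNneq lL' => <-.
by rewrite !inE zL' (fsubsetP Lbls_sub z zL') (negbTE zl) orbF.
Qed.

Lemma is_MCS_transfer R : is_MCS Psi R <-> is_MCS Phi R.
Proof.
split=> [[RL' satR minR]|[_ satR minR]].
  split; first exact: fsubset_trans Lbls_sub.
    exact/sat_induced_diff.
  by move=> l lR /(sat_induced_diffU1 R l); apply: minR.
have RL' : R `<=` Lbls Psi.
  apply/fsubsetP=> l lR; apply/negPn/negP => lL'.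
  by apply: (minR l lR); apply/sat_induced_diffU1_notin.
split=> //; first exact/sat_induced_diff.
by move=> l lR /(sat_induced_diffU1 R l); apply: minR.
Qed.

End MCSTransfer.
End Induced.

Section VariableElimination.
Variables (V Lbl : countType) (x : V).
Implicit Types (Phi P N : lcnf V Lbl) (M : {fset Lbl}) (a : V -> bool).

Lemma in_ve Phi c : (c \in ve Phi x) =
  [&& c \in Phi, (x, true) \notin c.1 & (x, false) \notin c.1]
  || (c \in resolvents x (occ_pos Phi x) (occ_neg Phi x)).
Proof.
rewrite /ve !inE; congr (_ || _).
by rewrite andbC; case: (c \in Phi) => //=; rewrite negb_or.
Qed.

Lemma Lbls_ve Phi : Lbls (ve Phi x) `<=` Lbls Phi.
Proof.
apply/fsubsetP=> l /bigfcupP [c /andP [cve _] lc].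
move: cve lc; rewrite in_ve => /orP [/andP [cPhi _]|/imfset2P [c1 + [c2 + ->]]].
  exact: (fsubsetP (Lbls_sup cPhi)).
rewrite !inE /= => /andP [c1Phi _] /andP [c2Phi _].
by case/orP => ?; [apply: (fsubsetP (Lbls_sup c1Phi)) | apply: (fsubsetP (Lbls_sup c2Phi))].
Qed.

Lemma induced_resolvents P N M :
  induced (resolvents x P N) M = resolvents x (induced P M) (induced N M).
Proof.
apply/fsetP=> c; rewrite inducedE; apply/andP/imfset2P.
  case=> /imfset2P [c1 c1P [c2 c2N ->]]; rewrite fsubUset => /andP [c1M c2M].
  by exists c1; rewrite ?inducedE ?c1P //; exists c2; rewrite ?inducedE ?c2N.
case=> c1 + [c2 + ->]; rewrite !inducedE => /andP [c1P c1M] /andP [c2N c2M].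
split; last by rewrite fsubUset c1M c2M.
by apply/imfset2P; exists c1 => //; exists c2.
Qed.

Lemma occ_pos_induced Phi M : occ_pos (induced Phi M) x = induced (occ_pos Phi x) M.
Proof. by apply/fsetP=> c; rewrite !inE andbAC. Qed.

Lemma occ_neg_induced Phi M : occ_neg (induced Phi M) x = induced (occ_neg Phi x) M.
Proof. by apply/fsetP=> c; rewrite !inE andbAC. Qed.

Lemma induced_ve Phi M : induced (ve Phi x) M = ve (induced Phi M) x.
Proof.
apply/fsetP=> c; rewrite inducedE !in_ve occ_pos_induced occ_neg_induced.
rewrite -induced_resolvents inducedE inducedE andb_orl.
by congr (_ || _); case: (c.2 `<=` M); rewrite ?andbT ?andbF.
Qed.

Lemma sat_resolvent a (c1 c2 : lclause V Lbl) : sat_clause a c1.1 -> sat_clause a c2.1 ->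
  sat_clause a (resolvent x c1 c2).1.
Proof.
move=> [l1 l1c1 sat1] [l2 l2c2 sat2].
have [ax|ax] := boolP (a x).
  exists l2 => //; rewrite !inE l2c2 andbT; apply/orP; right.
  by apply: contraTneq sat2 => ->; rewrite /sat_lit /= ax.
exists l1 => //; rewrite !inE l1c1 andbT; apply/orP; left.
by apply: contraTneq sat1 => ->; rewrite /sat_lit /= (negbTE ax).
Qed.

Definition upd a (b : bool) : V -> bool := fun v => if v == x then b else a v.

Lemma sat_lit_upd a b (l : lit V) : l != (x, true) -> l != (x, false) ->
  sat_lit (upd a b) l = sat_lit a l.
Proof.
case: l => v s neq_t neq_f; rewrite /sat_lit /upd /=.
by case: (v =P x) => // vx; move: neq_t neq_f; rewrite vx; case: s; rewrite eqxx.
Qed.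

Lemma sat_clause_upd_var a b c : (x, b) \in c -> sat_clause (upd a b) c.
Proof. by move=> xc; exists (x, b); rewrite // /sat_lit /upd /= eqxx. Qed.

Lemma sat_upd_of_sat_ve Phi a : (forall c, c \in ve Phi x -> sat_clause a c.1) ->
  exists b, forall c, c \in Phi -> sat_clause (upd a b) c.1.
Proof.
move=> sat_ve.
have sat_indep b c : c \in Phi -> (x, true) \notin c.1 -> (x, false) \notin c.1 ->
    sat_clause (upd a b) c.1.
  move=> cPhi nt nf; have [|l lc satl] := sat_ve c; first by rewrite in_ve cPhi nt nf.
  exists l; rewrite // sat_lit_upd //; by [apply: contraNneq nt => <- | apply: contraNneq nf => <-].
(* If setting x to false falsifies some c1 of Phi, then c1 contains x, and
   resolving c1 against any clause containing ~x shows that true works. *)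
case: (classic (forall c, c \in Phi -> sat_clause (upd a false) c.1)) => [sat_false|].
  by exists false.
move=> /not_all_ex_not [c1 /(imply_to_and (c1 \in Phi)) [c1Phi unsat1]].
have nf1 : (x, false) \notin c1.1 by apply/negP=> /(sat_clause_upd_var a); exact: unsat1.
have t1 : (x, true) \in c1.1 by apply/negPn/negP=> nt1; exact/unsat1/sat_indep.
exists true => c cPhi.
have [tc|nt] := boolP ((x, true) \in c.1); first exact: sat_clause_upd_var.
have [fc|nf] := boolP ((x, false) \in c.1); last exact: sat_indep.
have [|l] := sat_ve (resolvent x c1 c).
  rewrite in_ve; apply/orP; right; apply/imfset2P.
  by exists c1; rewrite ?inE ?c1Phi //; exists c; rewrite ?inE ?cPhi.
rewrite /= !inE => /orP [/andP [lt lc1]|/andP [lf lc]] satl.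
  have lf : l != (x, false) by apply: contraTneq lc1 => ->.
  by case: unsat1; exists l; rewrite // sat_lit_upd.
have lt : l != (x, true) by apply: contraTneq lc => ->.
by exists l; rewrite // sat_lit_upd.
Qed.

Lemma satisfiable_ve Phi : satisfiable (ve Phi x) <-> satisfiable Phi.
Proof.
rewrite !satisfiableP; split=> [[a /sat_upd_of_sat_ve [b sat_b]]|[a sat_a]].
  by exists (upd a b).
exists a => c; rewrite in_ve => /orP [/and3P [cPhi _ _]|/imfset2P [c1 + [c2 + ->]]].
  exact: sat_a.
by rewrite !inE => /andP [c1Phi _] /andP [c2Phi _]; apply: sat_resolvent; apply: sat_a.
Qed.

Lemma is_MCS_ve Phi R : is_MCS (ve Phi x) R <-> is_MCS Phi R.
Proof.
apply: is_MCS_transfer; first exact: Lbls_ve.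
by move=> M; rewrite induced_ve; apply: satisfiable_ve.
Qed.

End VariableElimination.

Theorem proposition2 (V Lbl : countType) (Phi : lcnf V Lbl) (x : V)
    (R : {fset Lbl}) :
  is_MCS (bve Phi x) R <-> is_MCS Phi R.
Proof. by rewrite /bve; case: ifP => _; first exact: is_MCS_ve. Qed.
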